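(* Let $n=2$, $K\in\{-1,0,1\}$, and let $k>0$ satisfy $k^2>\max(0,2K)$. Then $-\Delta_{{}^2g}+V_{S,k}$ has trivial $L^2$-kernel on $(\mathbb R^2,{}^2g)$, where, with $m=k^2-2K$, $$V_{S,k}(r)=\frac13\Big(\frac{6\mu}{r^3}+\frac{m}{r^2}+\frac{2m^2(m+3K)+216\mu^2/\ell^2}{(6\mu+mr)^2}\Big).$$
   Context: Fix constants $\ell>0$, $\mu\in\mathbb R$. Set $f(r)=\frac{r^2}{\ell^2}+K-\frac{2\mu}{r}$ (the case $n=2$). Assume $\mu>0$ if $K\in\{0,1\}$ and $\mu>\mu_{\min}:=-\frac{\ell}{3\sqrt3}$ if $K=-1$; let $r_0>0$ be the largest zero of $f$ (simple; $f>0,f'>0$ on $(r_0,\infty)$). Let ${}^2g=f(r)dt^2+f(r)^{-1}dr^2$ on $\mathbb R^2$, with $r\in[r_0,\infty)$, $t$ periodic of period $4\pi/f'(r_0)$, $(r,t)$ polar-type coordinates centred at $r=r_0$ (a smooth complete metric); $\Delta_{{}^2g}=\nabla^a\nabla_a$ on functions. *)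

From Stdlib Require Import Reals Lra.
Open Scope R_scope.

Definition fS (l K mu r : R) : R := r ^ 2 / l ^ 2 + K - 2 * mu / r.
Definition fSp (l mu r : R) : R := 2 * r / l ^ 2 + 2 * mu / r ^ 2.

Definition VSk (l K mu k r : R) : R :=
  let m := k ^ 2 - 2 * K in
  / 3 * (6 * mu / r ^ 3 + m / r ^ 2
         + (2 * m ^ 2 * (m + 3 * K) + 216 * mu ^ 2 / l ^ 2) / (6 * mu + m * r) ^ 2).

Definition cont2 (F : R -> R -> R) : Prop :=
  forall x y eps, 0 < eps -> exists d, 0 < d /\
    forall x' y', Rabs (x' - x) < d -> Rabs (y' - y) < d ->
      Rabs (F x' y' - F x y) < eps.

Fixpoint Ck2 (k : nat) (F : R -> R -> R) : Prop :=
  cont2 F /\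
  match k with
  | O => True
  | S k' => exists Fx Fy : R -> R -> R,
      (forall x y, derivable_pt_lim (fun a => F a y) x (Fx x y)) /\
      (forall x y, derivable_pt_lim (fun b => F x b) y (Fy x y)) /\
      Ck2 k' Fx /\ Ck2 k' Fy
  end.

Definition smooth2 (F : R -> R -> R) : Prop := forall k, Ck2 k F.

Definition is_integral (g : R -> R) (a b I : R) : Prop :=
  exists pr : Riemann_integrable g a b, RiemannInt pr = I.

(* The function in (r,t) coordinates attached to a function F on R^2 given in
   Cartesian coordinates of the smooth structure: the polar radius is
   sqrt(r - r0) and the polar angle is theta = 2 pi t / beta = (f'(r0)/2) t,
   beta = 4 pi / f'(r0) being the period of t. *)
Definition polar_rt (r0 c : R) (F : R -> R -> R) (r t : R) : R :=
  F (sqrt (r - r0) * cos (c * t)) (sqrt (r - r0) * sin (c * t)).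

From Stdlib Require Import Reals Lra Psatz.
From Coquelicot Require Import Coquelicot.
Open Scope R_scope.

(* Write [u(r,t)] for [F] in the coordinates [(r,t)], [f = fS], and [m = k^2 - 2K].
   The function [s = -6 mu f / (r (6 mu + m r))] satisfies
   [V_{S,k} + s' - s^2/f = d := m k^2 / (r (6 mu + m r)) > 0] on [(r0, oo)].
   Let [Q(r)] be the integral over a period in [t] of [f u u_r + s u^2].  Using
   the equation and an integration by parts in [t],
   [Q' = int (f (u_r + s u / f)^2 + u_t^2 / f + d u^2) dt >= 0].  Since [f] and
   [s] vanish at the horizon while [u] is smooth there, [Q(r) -> 0] as
   [r -> r0], so [Q >= 0].  If [Q(r1) > 0], the identity [Q = f M' / 2 + s M]
   for the mass [M(r) = int u^2 dt] keeps [M] bounded below on [[r1, oo)],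
   contradicting square integrability.  Hence [Q = 0], so [Q' = 0], which
   forces [M = 0], i.e. [u = 0], and [F = 0] by continuity. *)

(** * Calculus in one variable *)

Lemma continuity_pt_of_ex_derive (g : R -> R) x : ex_derive g x -> continuity_pt g x.
Proof. intro H. apply continuity_pt_filterlim. apply (ex_derive_continuous g x H). Qed.

Lemma MVT_between (g g' : R -> R) a b :
  (forall z, derivable_pt_lim g z (g' z)) ->
  exists c, Rabs (c - a) <= Rabs (b - a) /\ g b - g a = g' c * (b - a).
Proof.
  intros D. destruct (Rtotal_order a b) as [Hab|[Hab|Hab]].
  - destruct (MVT_cor2 g g' a b Hab (fun c _ => D c)) as [c [E Hc]].
    exists c. split; auto. rewrite !Rabs_right; lra.
  - subst. exists b. split; [lra | ring].
  - destruct (MVT_cor2 g g' b a Hab (fun c _ => D c)) as [c [E Hc]].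
    exists c. split; [rewrite !Rabs_left1; lra | lra].
Qed.

Lemma nondecreasing_of_deriv_nonneg (g dg : R -> R) a :
  (forall x, a < x -> is_derive g x (dg x)) -> (forall x, a < x -> 0 <= dg x) ->
  forall x y, a < x <= y -> g x <= g y.
Proof.
  intros D Pos x y Hxy.
  destruct (MVT_gen g x y dg) as [c [Hc E]];
    rewrite ?Rmin_left, ?Rmax_right in * by lra.
  - intros z Hz. apply D. lra.
  - intros z Hz. apply continuity_pt_of_ex_derive. exists (dg z). apply D. lra.
  - assert (0 <= dg c) by (apply Pos; lra). nra.
Qed.

Lemma is_derive_pos_left (g : R -> R) x dg : is_derive g x dg -> 0 < dg ->
  forall h, 0 < h -> exists y, x - h < y < x /\ g y < g x.
Proof.
  intros D Hdg h Hh. apply is_derive_Reals in D.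
  destruct (D dg Hdg) as [del Hdel].
  assert (Hm : 0 < Rmin del h) by (apply Rmin_glb_lt; [apply cond_pos | lra]).
  assert (Hm1 := Rmin_l del h). assert (Hm2 := Rmin_r del h).
  set (z := - Rmin del h / 2).
  assert (Hz : z < 0) by (unfold z; lra).
  assert (Hza : Rabs z < del) by (unfold z; rewrite Rabs_left; lra).
  specialize (Hdel z ltac:(lra) Hza). apply Rabs_def2 in Hdel.
  exists (x + z). split; [unfold z; lra |].
  assert (E : g (x + z) - g x = (g (x + z) - g x) / z * z) by (field; lra).
  nra.
Qed.

(* A minimum of [g] on [[r1, x]] below [m] would sit at a point where [g' > 0],
   hence [g] would be smaller just to its left. *)
Lemma stays_above_barrier (g dg : R -> R) r1 m :
  (forall x, r1 <= x -> is_derive g x (dg x)) ->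
  (forall x, r1 <= x -> g x < m -> 0 < dg x) ->
  m <= g r1 -> forall x, r1 <= x -> m <= g x.
Proof.
  intros D Push H1 x Hx. destruct (Rle_or_lt m (g x)) as [E|E]; auto. exfalso.
  destruct (continuity_ab_min g r1 x Hx) as [xm [Hmin Hxm]].
  { intros z Hz. apply continuity_pt_of_ex_derive. exists (dg z). apply D. lra. }
  assert (Gm : g xm < m) by (specialize (Hmin x ltac:(lra)); lra).
  assert (Hxm1 : r1 < xm) by (destruct (Req_dec r1 xm); [subst xm; lra | lra]).
  destruct (is_derive_pos_left g xm (dg xm) (D xm ltac:(lra)) (Push xm ltac:(lra) Gm)
              (xm - r1) ltac:(lra)) as [y [Hy Gy]].
  specialize (Hmin y ltac:(lra)). lra.
Qed.

Lemma is_RInt_of_is_integral (g : R -> R) a b I : is_integral g a b I -> is_RInt g a b I.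
Proof. intros [pr <-]. apply ex_RInt_Reals_aux_1. Qed.

Lemma ex_RInt_continuous_R (g : R -> R) a b : (forall t, continuous g t) -> ex_RInt g a b.
Proof. intros C. apply (@ex_RInt_continuous R_CompleteNormedModule). intros t _. apply C. Qed.

Lemma is_RInt_nonneg_eq0 (g : R -> R) a b t0 : a < t0 < b ->
  (forall t, continuous g t) -> (forall t, a <= t <= b -> 0 <= g t) ->
  is_RInt g a b 0 -> g t0 = 0.
Proof.
  intros Ht C Pos I.
  destruct (Rle_lt_or_eq_dec 0 (g t0) (Pos t0 ltac:(lra))) as [Hg|Hg]; [exfalso | auto].
  destruct (C t0 (fun y => 0 < y) (open_gt 0 (g t0) Hg)) as [del Hdel].
  set (h := Rmin del (Rmin (t0 - a) (b - t0)) / 2).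
  assert (Hh : 0 < h /\ h < del /\ h < t0 - a /\ h < b - t0).
  { assert (H1 := Rmin_l del (Rmin (t0 - a) (b - t0))).
    assert (H2 := Rmin_r del (Rmin (t0 - a) (b - t0))).
    assert (H3 := Rmin_l (t0 - a) (b - t0)). assert (H4 := Rmin_r (t0 - a) (b - t0)).
    assert (0 < Rmin del (Rmin (t0 - a) (b - t0)))
      by (apply Rmin_glb_lt; [apply cond_pos | apply Rmin_glb_lt; lra]).
    unfold h. lra. }
  assert (Ex : forall x y, ex_RInt g x y) by (intros; apply ex_RInt_continuous_R, C).
  assert (I123 := is_RInt_Chasles _ _ _ _ _ _
     (is_RInt_Chasles _ _ _ _ _ _ (RInt_correct g a (t0 - h) (Ex _ _))
        (RInt_correct g (t0 - h) (t0 + h) (Ex _ _)))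
     (RInt_correct g (t0 + h) b (Ex _ _))).
  assert (E := is_RInt_unique _ _ _ _ I123). rewrite (is_RInt_unique _ _ _ _ I) in E.
  assert (P1 : 0 <= RInt g a (t0 - h))
    by (apply RInt_ge_0; [lra | apply Ex | intros; apply Pos; lra]).
  assert (P3 : 0 <= RInt g (t0 + h) b)
    by (apply RInt_ge_0; [lra | apply Ex | intros; apply Pos; lra]).
  assert (P2 : 0 < RInt g (t0 - h) (t0 + h)).
  { apply RInt_gt_0; [lra | | intros; apply C].
    intros t Ht'. apply Hdel. change (Rabs (t - t0) < del). apply Rabs_def1; lra. }
  change (0 = RInt g a (t0 - h) + RInt g (t0 - h) (t0 + h) + RInt g (t0 + h) b) in E.
  lra.
Qed.

Lemma integrals_unbounded_of_ge_pos (g : R -> R) a r1 m M : a <= r1 -> 0 < m ->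
  (forall x, a <= x -> 0 <= g x) -> (forall x, r1 <= x -> m <= g x) ->
  ~ (forall b, a <= b -> exists I, is_integral g a b I /\ I <= M).
Proof.
  intros Ha Hm Pos Low Bnd.
  set (b := r1 + (Rabs M + 1) / m).
  assert (Hb : 0 < (Rabs M + 1) / m) by (apply Rdiv_lt_0_compat; [pose proof (Rabs_pos M) |]; lra).
  destruct (Bnd b ltac:(unfold b; lra)) as [I [HI IM]].
  apply is_RInt_of_is_integral in HI.
  assert (E1 : ex_RInt g a r1) by (apply (ex_RInt_Chasles_1 g a r1 b); [unfold b; lra | exists I; auto]).
  assert (E2 : ex_RInt g r1 b) by (apply (ex_RInt_Chasles_2 g a r1 b); [unfold b; lra | exists I; auto]).
  assert (I12 := is_RInt_Chasles g a r1 b _ _ (RInt_correct _ _ _ E1) (RInt_correct _ _ _ E2)).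
  assert (E := is_RInt_unique _ _ _ _ I12). rewrite (is_RInt_unique _ _ _ _ HI) in E.
  assert (P1 : 0 <= RInt g a r1) by (apply RInt_ge_0; [lra | exact E1 | intros; apply Pos; lra]).
  assert (P2 : (b - r1) * m <= RInt g r1 b).
  { replace ((b - r1) * m) with (RInt (fun _ => m) r1 b) by exact (RInt_const r1 b m).
    apply RInt_le; [unfold b; lra | apply ex_RInt_const | exact E2 |].
    intros; apply Low; lra. }
  assert (E3 : (b - r1) * m = Rabs M + 1) by (unfold b; field; lra).
  change (I = RInt g a r1 + RInt g r1 b) in E.
  pose proof (Rle_abs M). lra.
Qed.

(** * Functions of two variables *)

Lemma continuity_2d_pt_of_cont2 F : cont2 F -> forall x y, continuity_2d_pt F x y.
Proof.
  intros H x y eps. destruct (H x y eps (cond_pos eps)) as [d [dp Hd]].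
  exists (mkposreal d dp). exact Hd.
Qed.

Lemma continuity_2d_pt_comp2 (G g1 g2 : R -> R -> R) x y :
  continuity_2d_pt G (g1 x y) (g2 x y) -> continuity_2d_pt g1 x y ->
  continuity_2d_pt g2 x y -> continuity_2d_pt (fun u v => G (g1 u v) (g2 u v)) x y.
Proof.
  intros HG H1 H2 eps. destruct (HG eps) as [d Hd].
  destruct (H1 d) as [d1 Hd1]. destruct (H2 d) as [d2 Hd2].
  exists (mkposreal (Rmin d1 d2) (Rmin_pos _ _ (cond_pos d1) (cond_pos d2))).
  intros u v Hu Hv; simpl in *.
  assert (Hm1 := Rmin_l d1 d2). assert (Hm2 := Rmin_r d1 d2).
  apply Hd; [apply Hd1 | apply Hd2]; lra.
Qed.

Lemma continuity_2d_pt_fun_fst (h : R -> R) x y :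
  continuity_pt h x -> continuity_2d_pt (fun u _ => h u) x y.
Proof.
  intro H. apply (continuity_1d_2d_pt_comp h (fun u _ => u)); auto.
  apply continuity_2d_pt_id1.
Qed.

Lemma continuity_2d_pt_fun_snd (h : R -> R) x y :
  continuity_pt h y -> continuity_2d_pt (fun _ v => h v) x y.
Proof.
  intro H. apply (continuity_1d_2d_pt_comp h (fun _ v => v)); auto.
  apply continuity_2d_pt_id2.
Qed.

Lemma continuous_of_continuity_2d_pt_snd (g : R -> R -> R) x y :
  continuity_2d_pt g x y -> continuous (fun t => g x t) y.
Proof.
  intros H P [eps HP]. destruct (H eps) as [d Hd]. exists d. intros t Ht. apply HP.
  apply Hd; [rewrite Rminus_eq_0, Rabs_R0; apply cond_pos | exact Ht].
Qed.

Lemma ex_RInt_of_continuity_2d_pt (g : R -> R -> R) r a b :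
  (forall t, continuity_2d_pt g r t) -> ex_RInt (fun t => g r t) a b.
Proof. intros H. apply ex_RInt_continuous_R. intros t. apply continuous_of_continuity_2d_pt_snd, H. Qed.

Lemma is_derive_RInt_param_gt (g dg : R -> R -> R) a b r0 r : r0 < r ->
  (forall y t, r0 < y -> is_derive (fun z => g z t) y (dg y t)) ->
  (forall y t, r0 < y -> continuity_2d_pt dg y t) ->
  (forall y t, r0 < y -> continuity_2d_pt g y t) ->
  is_derive (fun y => RInt (fun t => g y t) a b) r (RInt (fun t => dg r t) a b).
Proof.
  intros Hr D Cd Cg.
  assert (Hloc : locally r (fun y => r0 < y)) by exact (open_gt r0 r Hr).
  rewrite (RInt_ext (fun t => dg r t) (fun t => Derive (fun z => g z t) r))
    by (intros; symmetry; apply is_derive_unique, D; auto).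
  apply is_derive_RInt_param.
  - apply (filter_imp (fun y => r0 < y)); auto. intros y Hy t _. eexists. apply D; auto.
  - intros t _. apply continuity_2d_pt_ext_loc with (f := dg); [| apply Cd; auto].
    exists (mkposreal (r - r0) ltac:(lra)). intros y v Hy Hv. simpl in Hy.
    symmetry. apply is_derive_unique, D. apply Rabs_def2 in Hy. lra.
  - apply (filter_imp (fun y => r0 < y)); auto. intros y Hy.
    apply ex_RInt_of_continuity_2d_pt. intros; apply Cg; auto.
Qed.

Ltac continuity_2d_step :=
  match goal with
  | |- continuity_2d_pt (fun _ _ => ?k) _ _ => apply continuity_2d_pt_const
  | |- continuity_2d_pt (fun u v => @?E u) _ _ => apply (continuity_2d_pt_fun_fst E)
  | |- continuity_2d_pt (fun u v => @?E v) _ _ => apply (continuity_2d_pt_fun_snd E)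
  | |- continuity_2d_pt (fun u v => @?A u v + @?B u v) _ _ => apply (continuity_2d_pt_plus A B)
  | |- continuity_2d_pt (fun u v => @?A u v - @?B u v) _ _ => apply (continuity_2d_pt_minus A B)
  | |- continuity_2d_pt (fun u v => @?A u v * @?B u v) _ _ => apply (continuity_2d_pt_mult A B)
  | |- continuity_2d_pt (fun u v => @?A u v / @?B u v) _ _ =>
       apply (continuity_2d_pt_ext (fun u v => A u v * / B u v)); [intros; reflexivity |]
  | |- continuity_2d_pt (fun u v => - @?A u v) _ _ => apply (continuity_2d_pt_opp A)
  | |- continuity_2d_pt (fun u v => ?G (@?A u v) (@?B u v)) _ _ =>
       apply (continuity_2d_pt_comp2 G A B)
  end.

(* Named functions of two variables end up, through the composition rule, as
   leaves [continuity_2d_pt G x y]; [atoms] must close these and the leaves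
   [continuity_pt h x].  Trying [atoms] only on leaves keeps unification from
   unfolding the arithmetic of [R]. *)
Ltac continuity_2d_with atoms := repeat (first [continuity_2d_step | atoms]).

Lemma differentiable_pt_lim_of_partials F Fx Fy :
  (forall x y, derivable_pt_lim (fun a => F a y) x (Fx x y)) ->
  (forall x y, derivable_pt_lim (fun b => F x b) y (Fy x y)) ->
  (forall x y, continuity_2d_pt Fx x y) -> (forall x y, continuity_2d_pt Fy x y) ->
  forall x y, differentiable_pt_lim F x y (Fx x y) (Fy x y).
Proof.
  intros dx dy cx cy x y eps.
  destruct (cx x y (pos_div_2 eps)) as [d1 H1]. destruct (cy x y (pos_div_2 eps)) as [d2 H2].
  exists (mkposreal (Rmin d1 d2) (Rmin_pos _ _ (cond_pos d1) (cond_pos d2))).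
  intros u v Hu Hv; simpl in Hu, Hv.
  assert (Hm1 := Rmin_l d1 d2). assert (Hm2 := Rmin_r d1 d2).
  destruct (MVT_between (fun a => F a v) (fun a => Fx a v) x u (fun z => dx z v)) as [c1 [Hc1 E1]].
  destruct (MVT_between (fun b => F x b) (fun b => Fy x b) y v (fun z => dy x z)) as [c2 [Hc2 E2]].
  assert (A1 : Rabs (Fx c1 v - Fx x y) < eps / 2) by (apply H1; lra).
  assert (A2 : Rabs (Fy x c2 - Fy x y) < eps / 2).
  { apply H2; [rewrite Rminus_eq_0, Rabs_R0; apply cond_pos | lra]. }
  replace (F u v - F x y - (Fx x y * (u - x) + Fy x y * (v - y))) with
    ((Fx c1 v - Fx x y) * (u - x) + (Fy x c2 - Fy x y) * (v - y)).
  2:{ replace (F u v - F x y) with ((F u v - F x v) + (F x v - F x y)) by ring.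
      rewrite E1, E2. ring. }
  eapply Rle_trans; [apply Rabs_triang |]. rewrite !Rabs_mult.
  assert (Rabs (Fx c1 v - Fx x y) * Rabs (u - x) <= eps / 2 * Rmax (Rabs (u - x)) (Rabs (v - y)))
    by (apply Rmult_le_compat; try apply Rabs_pos; try lra; apply Rmax_l).
  assert (Rabs (Fy x c2 - Fy x y) * Rabs (v - y) <= eps / 2 * Rmax (Rabs (u - x)) (Rabs (v - y)))
    by (apply Rmult_le_compat; try apply Rabs_pos; try lra; apply Rmax_r).
  lra.
Qed.

Lemma continuity_2d_pt_bounded_near_0 (G : R -> R -> R) : continuity_2d_pt G 0 0 ->
  exists d M, 0 < d /\ forall x y, Rabs x < d -> Rabs y < d -> Rabs (G x y) <= M.
Proof.
  intros CG. destruct (CG (mkposreal 1 Rlt_0_1)) as [d Hd].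
  exists d, (Rabs (G 0 0) + 1). split; [apply cond_pos |]. intros x y Hx Hy.
  assert (H := Hd x y ltac:(rewrite Rminus_0_r; auto) ltac:(rewrite Rminus_0_r; auto)).
  simpl in H. pose proof (Rabs_triang_inv (G x y) (G 0 0)). lra.
Qed.

Lemma polar_decomposition x y : y <> 0 ->
  exists rho th, 0 < rho /\ 0 < th < 2 * PI /\ x = rho * cos th /\ y = rho * sin th.
Proof.
  intros Hy. set (rho := sqrt (x ^ 2 + y ^ 2)).
  assert (Hy2 : 0 < y ^ 2) by (apply pow2_gt_0; auto).
  assert (Hrho : 0 < rho) by (apply sqrt_lt_R0; nra).
  assert (Hrr : rho * rho = x ^ 2 + y ^ 2) by (apply sqrt_sqrt; nra).
  set (z := x / rho).
  assert (Hz2 : 1 - z ^ 2 = (y / rho) ^ 2) by (unfold z; field_simplify_eq; [nra | lra]).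
  assert (Hyr : 0 < (y / rho) ^ 2) by (apply pow2_gt_0; unfold Rdiv;
      apply Rmult_integral_contrapositive; split; [lra | apply Rinv_neq_0_compat; lra]).
  assert (Hz : -1 < z < 1) by (split; nra).
  assert (Hc : cos (acos z) = z) by (apply cos_acos; lra).
  assert (Ha := acos_bound z).
  assert (Ha0 : 0 < acos z).
  { destruct (Req_dec (acos z) 0) as [E|E]; [rewrite E, cos_0 in Hc; lra | lra]. }
  assert (Hapi : acos z < PI).
  { destruct (Req_dec (acos z) PI) as [E|E]; [rewrite E, cos_PI in Hc; lra | lra]. }
  assert (Hs : sin (acos z) = Rabs y / rho).
  { rewrite sin_acos by lra.
    replace (1 - z²) with ((y / rho) ^ 2) by (rewrite <- Hz2; unfold Rsqr; ring).
    rewrite <- Rsqr_pow2, sqrt_Rsqr_abs, Rabs_div, (Rabs_right rho); lra. }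
  assert (Hpi := PI_RGT_0).
  exists rho. destruct (Rlt_or_le 0 y) as [Hp|Hn].
  - exists (acos z). repeat split; try lra.
    + rewrite Hc. unfold z. field. lra.
    + rewrite Hs, Rabs_right by lra. field. lra.
  - exists (2 * PI - acos z). repeat split; try lra.
    + rewrite cos_minus, cos_2PI, sin_2PI, Hc. unfold z. field. lra.
    + rewrite sin_minus, cos_2PI, sin_2PI, Hs, Rabs_left by lra. field. lra.
Qed.

Lemma continuous_eq0_off_axis (F : R -> R -> R) :
  (forall x y, continuity_2d_pt F x y) -> (forall x y, y <> 0 -> F x y = 0) ->
  forall x y, F x y = 0.
Proof.
  intros C Z x y. destruct (Req_dec y 0) as [->|Hy]; [| apply Z; auto].
  destruct (Req_dec (F x 0) 0) as [E|E]; auto. exfalso.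
  assert (He : 0 < Rabs (F x 0)) by (apply Rabs_pos_lt; auto).
  destruct (C x 0 (mkposreal _ He)) as [d Hd]. pose proof (cond_pos d).
  specialize (Hd x (d / 2) ltac:(rewrite Rminus_eq_0, Rabs_R0; lra)
                ltac:(rewrite Rminus_0_r, Rabs_right; lra)).
  simpl in Hd. rewrite (Z x (d / 2)), Rminus_0_l, Rabs_Ropp in Hd by lra. lra.
Qed.

Section C2_partials.
Local Set Implicit Arguments.

Record C2_partials (F Fx Fy Fxx Fxy Fyx Fyy : R -> R -> R) : Prop := {
  C2_dx : forall x y, derivable_pt_lim (fun a => F a y) x (Fx x y);
  C2_dy : forall x y, derivable_pt_lim (fun b => F x b) y (Fy x y);
  C2_dxx : forall x y, derivable_pt_lim (fun a => Fx a y) x (Fxx x y);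
  C2_dxy : forall x y, derivable_pt_lim (fun b => Fx x b) y (Fxy x y);
  C2_dyx : forall x y, derivable_pt_lim (fun a => Fy a y) x (Fyx x y);
  C2_dyy : forall x y, derivable_pt_lim (fun b => Fy x b) y (Fyy x y);
  C2_cont : forall x y, continuity_2d_pt F x y;
  C2_cont_x : forall x y, continuity_2d_pt Fx x y;
  C2_cont_y : forall x y, continuity_2d_pt Fy x y;
  C2_cont_xx : forall x y, continuity_2d_pt Fxx x y;
  C2_cont_xy : forall x y, continuity_2d_pt Fxy x y;
  C2_cont_yx : forall x y, continuity_2d_pt Fyx x y;
  C2_cont_yy : forall x y, continuity_2d_pt Fyy x y }.

End C2_partials.

Lemma smooth2_C2_partials F : smooth2 F ->
  exists Fx Fy Fxx Fxy Fyx Fyy, C2_partials F Fx Fy Fxx Fxy Fyx Fyy.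
Proof.
  intros hF. destruct (hF 2%nat) as [cF [Fx [Fy [dFx [dFy [CFx CFy]]]]]].
  destruct CFx as [cFx [Fxx [Fxy [dFxx [dFxy [[cFxx _] [cFxy _]]]]]]].
  destruct CFy as [cFy [Fyx [Fyy [dFyx [dFyy [[cFyx _] [cFyy _]]]]]]].
  exists Fx, Fy, Fxx, Fxy, Fyx, Fyy.
  split; auto; apply continuity_2d_pt_of_cont2; auto.
Qed.

(** * Polar coordinates centred at the horizon *)

Section Polar.
Variables (F Fx Fy Fxx Fxy Fyx Fyy : R -> R -> R) (r0 c : R).
Hypothesis hD : C2_partials F Fx Fy Fxx Fxy Fyx Fyy.

Definition polar_x r t := sqrt (r - r0) * cos (c * t).
Definition polar_y r t := sqrt (r - r0) * sin (c * t).

Local Notation u := (polar_rt r0 c F).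
Local Notation X r t := (polar_x r t).
Local Notation Y r t := (polar_y r t).

Definition polar_dr r t :=
  (Fx (X r t) (Y r t) * cos (c * t) + Fy (X r t) (Y r t) * sin (c * t)) / (2 * sqrt (r - r0)).
Definition polar_dt r t := Fx (X r t) (Y r t) * (- c * Y r t) + Fy (X r t) (Y r t) * (c * X r t).
Definition polar_dtt r t :=
  (Fxx (X r t) (Y r t) * (- c * Y r t) + Fxy (X r t) (Y r t) * (c * X r t)) * (- c * Y r t)
  - c * c * X r t * Fx (X r t) (Y r t)
  + (Fyx (X r t) (Y r t) * (- c * Y r t) + Fyy (X r t) (Y r t) * (c * X r t)) * (c * X r t)
  - c * c * Y r t * Fy (X r t) (Y r t).

Lemma polar_x_dr r t : r0 < r ->
  derivable_pt_lim (fun a => X a t) r (cos (c * t) / (2 * sqrt (r - r0))).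
Proof.
  intros Hr. apply is_derive_Reals. unfold polar_x. auto_derive; [lra |].
  unfold Rminus. field. apply Rgt_not_eq, sqrt_lt_R0; lra.
Qed.

Lemma polar_y_dr r t : r0 < r ->
  derivable_pt_lim (fun a => Y a t) r (sin (c * t) / (2 * sqrt (r - r0))).
Proof.
  intros Hr. apply is_derive_Reals. unfold polar_y. auto_derive; [lra |].
  unfold Rminus. field. apply Rgt_not_eq, sqrt_lt_R0; lra.
Qed.

Lemma polar_x_dt r t : derivable_pt_lim (fun b => X r b) t (- c * Y r t).
Proof. apply is_derive_Reals. unfold polar_x, polar_y. auto_derive; auto. ring. Qed.

Lemma polar_y_dt r t : derivable_pt_lim (fun b => Y r b) t (c * X r t).
Proof. apply is_derive_Reals. unfold polar_x, polar_y. auto_derive; auto. ring. Qed.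

Lemma differentiable_pt_lim_F x y : differentiable_pt_lim F x y (Fx x y) (Fy x y).
Proof. apply differentiable_pt_lim_of_partials; apply hD. Qed.

Lemma differentiable_pt_lim_Fx x y : differentiable_pt_lim Fx x y (Fxx x y) (Fxy x y).
Proof. apply differentiable_pt_lim_of_partials; apply hD. Qed.

Lemma differentiable_pt_lim_Fy x y : differentiable_pt_lim Fy x y (Fyx x y) (Fyy x y).
Proof. apply differentiable_pt_lim_of_partials; apply hD. Qed.

Lemma polar_rt_dr r t : r0 < r -> derivable_pt_lim (fun a => u a t) r (polar_dr r t).
Proof.
  intros Hr. assert (Hs : 0 < sqrt (r - r0)) by (apply sqrt_lt_R0; lra).
  replace (polar_dr r t) with (Fx (X r t) (Y r t) * (cos (c * t) / (2 * sqrt (r - r0)))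
                               + Fy (X r t) (Y r t) * (sin (c * t) / (2 * sqrt (r - r0))))
    by (unfold polar_dr; field; lra).
  apply (derivable_pt_lim_comp_2d F);
    [apply differentiable_pt_lim_F | apply polar_x_dr | apply polar_y_dr]; auto.
Qed.

Lemma polar_rt_dt r t : derivable_pt_lim (fun b => u r b) t (polar_dt r t).
Proof.
  apply (derivable_pt_lim_comp_2d F);
    [apply differentiable_pt_lim_F | apply polar_x_dt | apply polar_y_dt].
Qed.

Lemma polar_dt_dt r t : derivable_pt_lim (fun b => polar_dt r b) t (polar_dtt r t).
Proof.
  assert (Dx := polar_x_dt r t). assert (Dy := polar_y_dt r t).
  assert (DFx := derivable_pt_lim_comp_2d Fx _ _ t _ _ _ _ (differentiable_pt_lim_Fx _ _) Dx Dy).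
  assert (DFy := derivable_pt_lim_comp_2d Fy _ _ t _ _ _ _ (differentiable_pt_lim_Fy _ _) Dx Dy).
  assert (D := derivable_pt_lim_plus _ _ t _ _
    (derivable_pt_lim_mult _ _ t _ _ DFx (derivable_pt_lim_scal _ (- c) _ _ Dy))
    (derivable_pt_lim_mult _ _ t _ _ DFy (derivable_pt_lim_scal _ c _ _ Dx))).
  replace (polar_dtt r t) with
    ((Fxx (X r t) (Y r t) * (- c * Y r t) + Fxy (X r t) (Y r t) * (c * X r t)) * (- c * Y r t)
     + Fx (X r t) (Y r t) * (- c * (c * X r t))
     + ((Fyx (X r t) (Y r t) * (- c * Y r t) + Fyy (X r t) (Y r t) * (c * X r t)) * (c * X r t)
        + Fy (X r t) (Y r t) * (c * (- c * Y r t)))) by (unfold polar_dtt; ring).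
  exact D.
Qed.

Ltac polar_atoms :=
  first [ apply (C2_cont hD) | apply (C2_cont_x hD) | apply (C2_cont_y hD)
        | apply (C2_cont_xx hD) | apply (C2_cont_xy hD) | apply (C2_cont_yx hD)
        | apply (C2_cont_yy hD)
        | solve [apply continuity_pt_of_ex_derive; auto_derive;
                 repeat split; unfold Rminus in *; lra] ].

Lemma polar_rt_cont r t : r0 < r -> continuity_2d_pt u r t.
Proof. intros Hr. unfold polar_rt. continuity_2d_with polar_atoms. Qed.

Lemma polar_dr_cont r t : r0 < r -> continuity_2d_pt polar_dr r t.
Proof.
  intros Hr. assert (0 < sqrt (r - r0)) by (apply sqrt_lt_R0; lra).
  unfold polar_dr, polar_x, polar_y. continuity_2d_with polar_atoms.
Qed.

Lemma polar_dt_cont r t : r0 < r -> continuity_2d_pt polar_dt r t.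
Proof. intros Hr. unfold polar_dt, polar_x, polar_y. continuity_2d_with polar_atoms. Qed.

Lemma polar_dtt_cont r t : r0 < r -> continuity_2d_pt polar_dtt r t.
Proof. intros Hr. unfold polar_dtt, polar_x, polar_y. continuity_2d_with polar_atoms. Qed.

Lemma polar_periodic P r : c * P = 2 * PI -> u r P = u r 0 /\ polar_dt r P = polar_dt r 0.
Proof.
  intros hcP. unfold polar_rt, polar_dt, polar_x, polar_y.
  rewrite hcP, Rmult_0_r, cos_0, sin_0, cos_2PI, sin_2PI. split; reflexivity.
Qed.

Lemma polar_rt_at rho th : 0 <= rho -> c <> 0 ->
  u (r0 + rho ^ 2) (th / c) = F (rho * cos th) (rho * sin th).
Proof.
  intros Hrho Hc. unfold polar_rt.
  replace (r0 + rho ^ 2 - r0) with (rho ^ 2) by ring.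
  rewrite sqrt_pow2 by lra. replace (c * (th / c)) with th by (field; auto). reflexivity.
Qed.

Lemma polar_bounded_near_horizon : exists del M, 0 < del /\
  forall r t, r0 < r -> sqrt (r - r0) < del ->
    Rabs (u r t) <= M /\ Rabs (sqrt (r - r0) * polar_dr r t) <= M.
Proof.
  destruct (continuity_2d_pt_bounded_near_0 F (C2_cont hD 0 0)) as (d1 & M1 & Hd1 & B1).
  destruct (continuity_2d_pt_bounded_near_0 Fx (C2_cont_x hD 0 0)) as (d2 & M2 & Hd2 & B2).
  destruct (continuity_2d_pt_bounded_near_0 Fy (C2_cont_y hD 0 0)) as (d3 & M3 & Hd3 & B3).
  exists (Rmin d1 (Rmin d2 d3)), (M1 + M2 + M3).
  split; [repeat apply Rmin_glb_lt; auto |]. intros r t Hr Hsd.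
  assert (Hm := Rmin_l d1 (Rmin d2 d3)). assert (Hm' := Rmin_r d1 (Rmin d2 d3)).
  assert (Hm2 := Rmin_l d2 d3). assert (Hm3 := Rmin_r d2 d3).
  assert (Hs : 0 < sqrt (r - r0)) by (apply sqrt_lt_R0; lra).
  assert (Hcos : Rabs (cos (c * t)) <= 1) by (apply Rabs_le, COS_bound).
  assert (Hsin : Rabs (sin (c * t)) <= 1) by (apply Rabs_le, SIN_bound).
  assert (HX : Rabs (X r t) < Rmin d1 (Rmin d2 d3)).
  { unfold polar_x. rewrite Rabs_mult, (Rabs_right (sqrt _)) by lra.
    pose proof (Rabs_pos (cos (c * t))). nra. }
  assert (HY : Rabs (Y r t) < Rmin d1 (Rmin d2 d3)).
  { unfold polar_y. rewrite Rabs_mult, (Rabs_right (sqrt _)) by lra.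
    pose proof (Rabs_pos (sin (c * t))). nra. }
  assert (A1 := B1 (X r t) (Y r t) ltac:(lra) ltac:(lra)).
  assert (A2 := B2 (X r t) (Y r t) ltac:(lra) ltac:(lra)).
  assert (A3 := B3 (X r t) (Y r t) ltac:(lra) ltac:(lra)).
  pose proof (Rabs_pos (Fx (X r t) (Y r t))). pose proof (Rabs_pos (Fy (X r t) (Y r t))).
  split; [apply Rle_trans with M1; [exact A1 | lra] |].
  replace (sqrt (r - r0) * polar_dr r t)
    with ((Fx (X r t) (Y r t) * cos (c * t) + Fy (X r t) (Y r t) * sin (c * t)) / 2)
    by (unfold polar_dr; field; lra).
  unfold Rdiv. rewrite Rabs_mult, (Rabs_right (/ 2)) by lra.
  pose proof (Rabs_triang (Fx (X r t) (Y r t) * cos (c * t)) (Fy (X r t) (Y r t) * sin (c * t))).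
  rewrite !Rabs_mult in *.
  pose proof (Rabs_pos (Rabs (cos (c * t)))). pose proof (Rabs_pos M1).
  assert (0 <= M1) by (pose proof (Rabs_pos (F (X r t) (Y r t))); lra).
  nra.
Qed.

End Polar.

(** * The energy argument *)

Section Equation.
Variables (r0 c : R) (f fp V : R -> R) (F Fx Fy Fxx Fxy Fyx Fyy Ur Urr Ut Utt : R -> R -> R).
Hypotheses (hD : C2_partials F Fx Fy Fxx Fxy Fyx Fyy)
  (hf_pos : forall r, r0 < r -> 0 < f r)
  (hUr : forall r t, r0 < r -> derivable_pt_lim (fun a => polar_rt r0 c F a t) r (Ur r t))
  (hUrr : forall r t, r0 < r -> derivable_pt_lim (fun a => Ur a t) r (Urr r t))
  (hUt : forall r t, r0 < r -> derivable_pt_lim (fun b => polar_rt r0 c F r b) t (Ut r t))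
  (hUtt : forall r t, r0 < r -> derivable_pt_lim (fun b => Ut r b) t (Utt r t))
  (hpde : forall r t, r0 < r ->
     - (fp r * Ur r t + f r * Urr r t + Utt r t / f r) + V r * polar_rt r0 c F r t = 0).

Local Notation u := (polar_rt r0 c F).
Local Notation ur := (polar_dr Fx Fy r0 c).
Local Notation utt := (polar_dtt Fx Fy Fxx Fxy Fyx Fyy r0 c).

Definition polar_drr r t := (V r * u r t - fp r * ur r t - utt r t / f r) / f r.

Lemma polar_dr_dr r t : r0 < r -> derivable_pt_lim (fun a => ur a t) r (polar_drr r t).
Proof.
  intros Hr.
  assert (EUr : forall a, r0 < a -> Ur a t = ur a t).
  { intros a Ha. eapply uniqueness_limite; [apply hUr | apply (polar_rt_dr _ _ _ _ _ _ _ _ _ hD)]; auto. }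
  assert (EUt : forall b, Ut r b = polar_dt Fx Fy r0 c r b).
  { intros b. eapply uniqueness_limite; [apply hUt | apply (polar_rt_dt _ _ _ _ _ _ _ _ _ hD)]; auto. }
  assert (EUtt : Utt r t = utt r t).
  { eapply uniqueness_limite; [| apply (polar_dt_dt _ _ _ _ _ _ _ _ _ hD)].
    apply is_derive_Reals. apply (is_derive_ext (fun b => Ut r b)); [apply EUt |].
    apply is_derive_Reals; auto. }
  apply is_derive_Reals. apply (is_derive_ext_loc (fun a => Ur a t)).
  { apply (filter_imp (fun a => r0 < a)); [apply EUr | exact (open_gt r0 r Hr)]. }
  replace (polar_drr r t) with (Urr r t); [apply is_derive_Reals; auto |].
  assert (E := hpde r t Hr). rewrite EUr, EUtt in E by auto.
  assert (Hf := hf_pos r Hr). unfold polar_drr. apply (Rmult_eq_reg_l (f r)); [| lra].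
  replace (f r * ((V r * u r t - fp r * ur r t - utt r t / f r) / f r))
    with (V r * u r t - fp r * ur r t - utt r t / f r) by (field; lra).
  lra.
Qed.

End Equation.

Section Energy.
Variables (r0 c P : R) (f fp s sp V d : R -> R).
Variables (F Fx Fy Fxx Fxy Fyx Fyy : R -> R -> R).
Hypotheses (hD : C2_partials F Fx Fy Fxx Fxy Fyx Fyy) (hP : 0 < P) (hcP : c * P = 2 * PI).
Hypotheses (hf_deriv : forall r, r0 < r -> is_derive f r (fp r))
  (hs_deriv : forall r, r0 < r -> is_derive s r (sp r))
  (hfp_cont : forall r, r0 < r -> continuity_pt fp r)
  (hsp_cont : forall r, r0 < r -> continuity_pt sp r)
  (hV_cont : forall r, r0 < r -> continuity_pt V r)
  (hf_pos : forall r, r0 < r -> 0 < f r)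
  (hriccati : forall r, r0 < r -> V r + sp r - s r ^ 2 / f r = d r)
  (hd_pos : forall r, r0 < r -> 0 < d r).

Local Notation u := (polar_rt r0 c F).
Local Notation ur := (polar_dr Fx Fy r0 c).
Local Notation ut := (polar_dt Fx Fy r0 c).
Local Notation utt := (polar_dtt Fx Fy Fxx Fxy Fyx Fyy r0 c).
Local Notation urr := (polar_drr r0 c f fp V F Fx Fy Fxx Fxy Fyx Fyy).

Let u_dr r t : r0 < r -> derivable_pt_lim (fun a => u a t) r (ur r t) :=
  polar_rt_dr F Fx Fy Fxx Fxy Fyx Fyy r0 c hD r t.
Let u_dt r t : derivable_pt_lim (fun b => u r b) t (ut r t) :=
  polar_rt_dt F Fx Fy Fxx Fxy Fyx Fyy r0 c hD r t.
Let ut_dt r t : derivable_pt_lim (fun b => ut r b) t (utt r t) :=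
  polar_dt_dt F Fx Fy Fxx Fxy Fyx Fyy r0 c hD r t.
Let u_cont r t : r0 < r -> continuity_2d_pt u r t :=
  polar_rt_cont F Fx Fy Fxx Fxy Fyx Fyy r0 c hD r t.
Let ur_cont r t : r0 < r -> continuity_2d_pt ur r t :=
  polar_dr_cont F Fx Fy Fxx Fxy Fyx Fyy r0 c hD r t.
Let ut_cont r t : r0 < r -> continuity_2d_pt ut r t :=
  polar_dt_cont F Fx Fy Fxx Fxy Fyx Fyy r0 c hD r t.
Let utt_cont r t : r0 < r -> continuity_2d_pt utt r t :=
  polar_dtt_cont F Fx Fy Fxx Fxy Fyx Fyy r0 c hD r t.

Hypothesis hurr : forall r t, r0 < r -> derivable_pt_lim (fun a => ur a t) r (urr r t).

Lemma continuity_pt_inv_f r : r0 < r -> continuity_pt (fun x => / f x) r.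
Proof.
  intros Hr. apply (continuity_pt_inv (fun x => f x)); [| apply Rgt_not_eq, hf_pos; auto].
  apply continuity_pt_of_ex_derive. eexists. apply hf_deriv; auto.
Qed.

Ltac energy_leaves :=
  idtac; lazymatch goal with
  | |- continuity_2d_pt u _ _ => apply u_cont; lra
  | |- continuity_2d_pt ur _ _ => apply ur_cont; lra
  | |- continuity_2d_pt ut _ _ => apply ut_cont; lra
  | |- continuity_2d_pt utt _ _ => apply utt_cont; lra
  | |- continuity_pt (fun x => x) _ => apply continuity_pt_id
  | |- continuity_pt (fun x => / f x) _ => apply continuity_pt_inv_f; lra
  | |- continuity_pt (fun x => f x) _ =>
      apply continuity_pt_of_ex_derive; eexists; apply hf_deriv; lra
  | |- continuity_pt (fun x => s x) _ =>
      apply continuity_pt_of_ex_derive; eexists; apply hs_deriv; lra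
  | |- continuity_pt (fun x => fp x) _ => apply hfp_cont; lra
  | |- continuity_pt (fun x => sp x) _ => apply hsp_cont; lra
  | |- continuity_pt (fun x => V x) _ => apply hV_cont; lra
  end.

Lemma polar_drr_cont r t : r0 < r -> continuity_2d_pt urr r t.
Proof. intros Hr. unfold polar_drr. continuity_2d_with energy_leaves. Qed.

Ltac energy_atoms :=
  idtac; lazymatch goal with
  | |- continuity_2d_pt urr _ _ => apply polar_drr_cont; lra
  | _ => energy_leaves
  end.

Definition mass r := RInt (fun t => u r t * u r t) 0 P.
Definition flux r := RInt (fun t => u r t * ur r t) 0 P.
Definition energy_density r t := f r * (u r t * ur r t) + s r * (u r t * u r t).
Definition energy r := RInt (fun t => energy_density r t) 0 P.
Definition energy_density_dr r t :=
  fp r * (u r t * ur r t) + f r * (ur r t * ur r t + u r t * urr r t)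
  + sp r * (u r t * u r t) + s r * (2 * (u r t * ur r t)).
Definition energy_dr r := RInt (fun t => energy_density_dr r t) 0 P.

Lemma ex_RInt_mass r : r0 < r -> ex_RInt (fun t => u r t * u r t) 0 P.
Proof.
  intros Hr. apply (ex_RInt_of_continuity_2d_pt (fun r t => u r t * u r t)).
  intros t. continuity_2d_with energy_atoms.
Qed.

Lemma ex_RInt_flux r : r0 < r -> ex_RInt (fun t => u r t * ur r t) 0 P.
Proof.
  intros Hr. apply (ex_RInt_of_continuity_2d_pt (fun r t => u r t * ur r t)).
  intros t. continuity_2d_with energy_atoms.
Qed.

Lemma ex_RInt_energy r : r0 < r -> ex_RInt (fun t => energy_density r t) 0 P.
Proof.
  intros Hr. apply (ex_RInt_of_continuity_2d_pt energy_density).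
  intros t. unfold energy_density. continuity_2d_with energy_atoms.
Qed.

Lemma mass_is_derive r : r0 < r -> is_derive mass r (2 * flux r).
Proof.
  intros Hr. replace (2 * flux r) with (RInt (fun t => 2 * (u r t * ur r t)) 0 P)
    by (apply (RInt_scal (fun t => u r t * ur r t)); apply ex_RInt_flux; auto).
  apply (is_derive_RInt_param_gt (fun r t => u r t * u r t) (fun r t => 2 * (u r t * ur r t)) 0 P r0);
    [exact Hr | intros y t Hy .. ]; [| continuity_2d_with energy_atoms | continuity_2d_with energy_atoms].
  apply is_derive_Reals.
  replace (2 * (u y t * ur y t)) with (ur y t * u y t + u y t * ur y t) by ring.
  apply (derivable_pt_lim_mult (fun a => u a t) (fun a => u a t)); apply u_dr, Hy.
Qed.

Lemma energy_is_derive r : r0 < r -> is_derive energy r (energy_dr r).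
Proof.
  intros Hr. apply (is_derive_RInt_param_gt energy_density energy_density_dr 0 P r0);
    [exact Hr | intros y t Hy .. ];
    [| unfold energy_density_dr; continuity_2d_with energy_atoms
     | unfold energy_density; continuity_2d_with energy_atoms].
  apply is_derive_Reals. unfold energy_density.
  assert (Df := hf_deriv y Hy). assert (Ds := hs_deriv y Hy).
  apply is_derive_Reals in Df, Ds.
  assert (Du := u_dr y t Hy). assert (Dur := hurr y t Hy).
  evar_last.
  - apply derivable_pt_lim_plus; apply derivable_pt_lim_mult;
      [exact Df | | exact Ds |]; apply derivable_pt_lim_mult; first [apply Du | apply Dur].
  - unfold energy_density_dr. ring.
Qed.



Lemma energy_eq r : r0 < r -> energy r = f r * flux r + s r * mass r.
Proof.
  intros Hr. apply is_RInt_unique.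
  exact (is_RInt_plus _ _ _ _ _ _
    (is_RInt_scal _ _ _ (f r) _ (RInt_correct _ _ _ (ex_RInt_flux r Hr)))
    (is_RInt_scal _ _ _ (s r) _ (RInt_correct _ _ _ (ex_RInt_mass r Hr)))).
Qed.

Lemma mass_nonneg r : r0 < r -> 0 <= mass r.
Proof.
  intros Hr. apply RInt_ge_0; [lra | apply ex_RInt_mass; auto |]. intros. nra.
Qed.

(* [ut^2 + u utt] is the [t]-derivative of [u ut], which is [P]-periodic. *)
Lemma polar_dt_sq_ibp r : r0 < r ->
  is_RInt (fun t => ut r t * ut r t + u r t * utt r t) 0 P 0.
Proof.
  intros Hr.
  assert (I := is_RInt_derive (fun t => u r t * ut r t)
                 (fun t => ut r t * ut r t + u r t * utt r t) 0 P).
  destruct (polar_periodic F Fx Fy r0 c P r hcP) as [E1 E2].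
  cbv beta in I. rewrite E1, E2, minus_eq_zero in I. apply I.
  - intros t _. apply is_derive_Reals, derivable_pt_lim_mult; [apply u_dt | apply ut_dt].
  - intros t _. apply continuous_of_continuity_2d_pt_snd with
      (g := fun r t => ut r t * ut r t + u r t * utt r t).
    continuity_2d_with energy_atoms.
Qed.

(* Completing the square with the Riccati identity: the integrand of [energy_dr]
   equals [d u^2 + f (u_r + s u / f)^2 + u_t^2 / f] up to the exact
   [t]-derivative [(u u_t)' / f]. *)
Lemma energy_dr_ge r : r0 < r -> d r * mass r <= energy_dr r.
Proof.
  intros Hr. assert (Hf := hf_pos r Hr).
  assert (I := is_RInt_plus _ _ _ _ _ _
    (is_RInt_scal _ _ _ (d r) _ (RInt_correct _ _ _ (ex_RInt_mass r Hr)))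
    (is_RInt_scal _ _ _ (- / f r) _ (polar_dt_sq_ibp r Hr))).
  replace (d r * mass r) with (d r * mass r + - / f r * 0) by ring.
  apply (is_RInt_le _ (fun t => energy_density_dr r t) 0 P _ (energy_dr r) ltac:(lra) I).
  - unfold energy_dr. apply (@RInt_correct R_CompleteNormedModule).
    apply (ex_RInt_of_continuity_2d_pt energy_density_dr).
    intros t. unfold energy_density_dr. continuity_2d_with energy_atoms.
  - intros t _. change (d r * (u r t * u r t) + - / f r * (ut r t * ut r t + u r t * utt r t)
                          <= energy_density_dr r t).
    assert (E : energy_density_dr r t
                - (d r * (u r t * u r t) + - / f r * (ut r t * ut r t + u r t * utt r t))
                = f r * (ur r t + s r * u r t / f r) ^ 2 + ut r t * ut r t / f r).
    { rewrite <- (hriccati r Hr). unfold energy_density_dr, polar_drr. field. lra. }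
    assert (0 <= f r * (ur r t + s r * u r t / f r) ^ 2)
      by (apply Rmult_le_pos; [lra | apply pow2_ge_0]).
    assert (0 <= ut r t * ut r t / f r) by (apply Rle_mult_inv_pos; nra).
    lra.
Qed.

Lemma polar_eq0_of_mass_eq0 r t : r0 < r -> mass r = 0 -> 0 < t < P -> u r t = 0.
Proof.
  intros Hr E Ht.
  assert (I := RInt_correct _ _ _ (ex_RInt_mass r Hr)). fold (mass r) in I. rewrite E in I.
  assert (Z := is_RInt_nonneg_eq0 (fun t => u r t * u r t) 0 P t Ht
     (fun t => continuous_of_continuity_2d_pt_snd (fun r t => u r t * u r t) r t
        ltac:(continuity_2d_with energy_atoms))
     (fun t _ => ltac:(nra)) I).
  simpl in Z. nra.
Qed.

Lemma flux_eq0_of_mass_eq0 r : r0 < r -> mass r = 0 -> flux r = 0.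
Proof.
  intros Hr E. unfold flux.
  rewrite (RInt_ext _ (fun _ => 0)), RInt_const.
  - apply Rmult_0_r.
  - intros t Ht. rewrite Rmin_left, Rmax_right in Ht by lra.
    rewrite (polar_eq0_of_mass_eq0 r t Hr E Ht). apply Rmult_0_l.
Qed.

Lemma energy_dr_nonneg r : r0 < r -> 0 <= energy_dr r.
Proof.
  intros Hr. pose proof (energy_dr_ge r Hr). pose proof (mass_nonneg r Hr).
  pose proof (hd_pos r Hr). nra.
Qed.

Lemma energy_nondecreasing x y : r0 < x <= y -> energy x <= energy y.
Proof. apply (nondecreasing_of_deriv_nonneg energy energy_dr r0 energy_is_derive energy_dr_nonneg). Qed.

Hypothesis hnear : exists C, 0 < C /\ forall r, r0 < r <= r0 + 1 ->
  f r <= C * (r - r0) /\ Rabs (s r) <= C * (r - r0).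

(* [f] and [s] vanish to first order at the horizon, while [u] stays bounded and
   [u_r] blows up only like [(r - r0)^(-1/2)]. *)
Lemma energy_density_small_near_horizon : exists del K, 0 < del /\ 0 <= K /\
  forall r t, r0 < r -> sqrt (r - r0) < del ->
    Rabs (energy_density r t) <= K * sqrt (r - r0).
Proof.
  destruct hnear as (C & HC & Hn).
  destruct (polar_bounded_near_horizon F Fx Fy Fxx Fxy Fyx Fyy r0 c hD) as (del & M & Hdel & HM).
  exists (Rmin del 1), (2 * C * (M * M)).
  assert (Hm1 := Rmin_l del 1). assert (Hm2 := Rmin_r del 1).
  split; [apply Rmin_glb_lt; lra |]. split; [nra |].
  intros r t Hr Hsd. destruct (HM r t Hr ltac:(lra)) as [Hu Hur].
  assert (Hrho : 0 < sqrt (r - r0)) by (apply sqrt_lt_R0; lra).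
  assert (Hrr : sqrt (r - r0) * sqrt (r - r0) = r - r0) by (apply sqrt_sqrt; lra).
  set (rho := sqrt (r - r0)) in *.
  destruct (Hn r ltac:(nra)) as [Hf Hs].
  assert (Hf0 := hf_pos r Hr).
  pose proof (Rabs_pos (u r t)). pose proof (Rabs_pos (rho * ur r t)).
  assert (A1 : Rabs (f r * (u r t * ur r t)) <= C * rho * (M * M)).
  { replace (f r * (u r t * ur r t)) with (f r / rho * (u r t * (rho * ur r t)))
      by (field; lra).
    assert (0 <= f r / rho) by (apply Rlt_le, Rdiv_lt_0_compat; lra).
    rewrite Rabs_mult, (Rabs_right (f r / rho)), (Rabs_mult (u r t)) by lra.
    assert (f r / rho <= C * rho).
    { apply (Rmult_le_reg_r rho); [lra |]. unfold Rdiv. rewrite Rmult_assoc, Rinv_l; nra. }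
    apply Rmult_le_compat; [lra | nra | lra | apply Rmult_le_compat; lra]. }
  assert (A2 : Rabs (s r * (u r t * u r t)) <= C * rho * (M * M)).
  { rewrite !Rabs_mult.
    apply Rmult_le_compat; [apply Rabs_pos | nra | nra | apply Rmult_le_compat; lra]. }
  unfold energy_density. pose proof (Rabs_triang (f r * (u r t * ur r t)) (s r * (u r t * u r t))).
  lra.
Qed.

Lemma energy_small_near_horizon q r : 0 < q -> r0 < r ->
  exists r', r0 < r' <= r /\ - q < energy r'.
Proof.
  intros Hq Hr. destruct energy_density_small_near_horizon as (del & K & Hdel & HK & Hsmall).
  assert (Hsr : 0 < sqrt (r - r0)) by (apply sqrt_lt_R0; lra).
  assert (Hq' : 0 < q / (P * (K + 1))) by (apply Rdiv_lt_0_compat; nra).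
  set (rho := Rmin (Rmin (del / 2) (sqrt (r - r0))) (q / (P * (K + 1)))).
  assert (Hrho : 0 < rho /\ rho < del /\ rho <= sqrt (r - r0) /\ rho <= q / (P * (K + 1))).
  { assert (H1 := Rmin_l (Rmin (del / 2) (sqrt (r - r0))) (q / (P * (K + 1)))).
    assert (H2 := Rmin_r (Rmin (del / 2) (sqrt (r - r0))) (q / (P * (K + 1)))).
    assert (H3 := Rmin_l (del / 2) (sqrt (r - r0))). assert (H4 := Rmin_r (del / 2) (sqrt (r - r0))).
    assert (0 < rho) by (unfold rho; repeat apply Rmin_glb_lt; lra).
    unfold rho in *. lra. }
  exists (r0 + rho ^ 2).
  assert (Hsq : sqrt (r0 + rho ^ 2 - r0) = rho).
  { replace (r0 + rho ^ 2 - r0) with (rho ^ 2) by ring. apply sqrt_pow2. lra. }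
  assert (Hr' : r0 < r0 + rho ^ 2) by (pose proof (pow_lt rho 2 ltac:(lra)); lra).
  split; [split; [lra |] |].
  { pose proof (sqrt_sqrt (r - r0) ltac:(lra)). nra. }
  assert (Hsm : forall t, Rabs (energy_density (r0 + rho ^ 2) t) <= K * rho).
  { intros t. specialize (Hsmall (r0 + rho ^ 2) t Hr'). rewrite Hsq in Hsmall. apply Hsmall. lra. }
  assert (Hb := norm_RInt_le_const (fun t => energy_density (r0 + rho ^ 2) t) 0 P
                  (energy (r0 + rho ^ 2)) (K * rho) ltac:(lra) (fun t _ => Hsm t)
                  (RInt_correct _ _ _ (ex_RInt_energy _ Hr'))).
  change (Rabs (energy (r0 + rho ^ 2)) <= (P - 0) * (K * rho)) in Hb.
  assert (P * (K * rho) < q).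
  { assert (P * (K * rho) <= P * (K * (q / (P * (K + 1))))) by (apply Rmult_le_compat_l; nra).
    assert (P * (K * (q / (P * (K + 1)))) < q).
    { replace (P * (K * (q / (P * (K + 1))))) with (q * (K / (K + 1))) by (field; lra).
      assert (K / (K + 1) < 1) by (apply (Rmult_lt_reg_r (K + 1)); [lra |];
        unfold Rdiv; rewrite Rmult_assoc, Rinv_l; lra).
      nra. }
    lra. }
  pose proof (Rabs_maj2 (energy (r0 + rho ^ 2))). lra.
Qed.

Lemma energy_nonneg r : r0 < r -> 0 <= energy r.
Proof.
  intros Hr. destruct (Rle_or_lt 0 (energy r)) as [E|E]; auto. exfalso.
  destruct (energy_small_near_horizon (- energy r) r ltac:(lra) Hr) as [r' [Hr' Hq]].
  pose proof (energy_nondecreasing r' r ltac:(lra)). lra.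
Qed.

Hypothesis hs_bound : exists b, 0 < b /\ forall r, r0 < r -> s r <= b.
Hypothesis hL2 : exists G : R -> R,
  (forall r, r0 <= r -> is_integral (fun t => u r t ^ 2) 0 P (G r)) /\
  exists M, forall R0, r0 <= R0 -> exists I, is_integral G r0 R0 I /\ I <= M.

Lemma is_integral_mass r I : r0 < r -> is_integral (fun t => u r t ^ 2) 0 P I -> I = mass r.
Proof.
  intros Hr HI. symmetry. apply is_RInt_unique.
  apply (is_RInt_ext (fun t => u r t ^ 2)); [| apply is_RInt_of_is_integral, HI].
  intros t _. change (u r t ^ 2 = u r t * u r t). ring.
Qed.

(* If [energy r1 > 0], then wherever [mass] drops below [energy r1 / (2 b)] the
   identity [energy = f flux + s mass] forces [flux > 0], i.e. [mass' > 0]; so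
   [mass] stays bounded below by a positive constant, against square
   integrability. *)
Lemma energy_nonpos r1 : r0 < r1 -> energy r1 <= 0.
Proof.
  intros Hr1. destruct (Rle_or_lt (energy r1) 0) as [E|E]; auto. exfalso.
  destruct hs_bound as (b & Hb & Hsb).
  set (m := energy r1 / (2 * b)).
  assert (Hm : 0 < m) by (apply Rdiv_lt_0_compat; lra).
  assert (push : forall x, r1 <= x -> mass x < m -> 0 < 2 * flux x).
  { intros x Hx Hmx. assert (Hx0 : r0 < x) by lra.
    assert (Q := energy_nondecreasing r1 x ltac:(lra)). rewrite (energy_eq x Hx0) in Q.
    assert (s x * mass x <= b * mass x)
      by (apply Rmult_le_compat_r; [apply mass_nonneg | apply Hsb]; lra).
    assert (b * mass x < energy r1 / 2).
    { apply Rlt_le_trans with (b * m); [apply Rmult_lt_compat_l; lra |].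
      unfold m. right. field. lra. }
    assert (0 < f x * flux x) by lra.
    assert (Hfx := hf_pos x Hx0). destruct (Rle_or_lt (flux x) 0); nra. }
  assert (Hmass1 : 0 < mass r1).
  { destruct (Rle_lt_or_eq_dec 0 (mass r1) (mass_nonneg r1 Hr1)) as [H|H]; auto.
    rewrite (energy_eq r1 Hr1), (flux_eq0_of_mass_eq0 r1 Hr1 (eq_sym H)), <- H in E. lra. }
  set (m0 := Rmin m (mass r1)).
  assert (Hm0 : 0 < m0) by (apply Rmin_glb_lt; lra).
  assert (Hm0' : m0 <= m /\ m0 <= mass r1) by (split; [apply Rmin_l | apply Rmin_r]).
  assert (Low := stays_above_barrier mass (fun x => 2 * flux x) r1 m0
                   (fun x Hx => mass_is_derive x ltac:(lra))
                   (fun x Hx Hmx => push x Hx ltac:(lra)) (proj2 Hm0')).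
  destruct hL2 as (G & HG & M & HM).
  apply (integrals_unbounded_of_ge_pos G r0 r1 m0 M); auto; [lra | |].
  - intros x Hx. apply (is_RInt_ge_0 _ 0 P _ (Rlt_le _ _ hP) (is_RInt_of_is_integral _ _ _ _ (HG x Hx))).
    intros. apply pow2_ge_0.
  - intros x Hx. rewrite (is_integral_mass x (G x) ltac:(lra) (HG x ltac:(lra))). auto.
Qed.

Lemma mass_eq0 r : r0 < r -> mass r = 0.
Proof.
  intros Hr.
  assert (Z : forall x, r0 < x -> energy x = 0).
  { intros x Hx. pose proof (energy_nonneg x Hx). pose proof (energy_nonpos x Hx). lra. }
  assert (D0 : is_derive energy r 0).
  { apply (is_derive_ext_loc (fun _ => 0)); [| apply (is_derive_const 0 r)].
    apply (filter_imp (fun y => r0 < y)); [intros y Hy; rewrite Z; auto | exact (open_gt r0 r Hr)]. }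
  assert (E : energy_dr r = 0) by (rewrite <- (is_derive_unique _ _ _ (energy_is_derive r Hr));
                                   apply is_derive_unique; auto).
  pose proof (energy_dr_ge r Hr). pose proof (mass_nonneg r Hr). pose proof (hd_pos r Hr). nra.
Qed.

Theorem riccati_energy_vanishing x y : F x y = 0.
Proof.
  apply (continuous_eq0_off_axis F (C2_cont hD)). clear x y. intros x y Hy.
  destruct (polar_decomposition x y Hy) as (rho & th & Hrho & Hth & -> & ->).
  assert (Hc : 0 < c) by (pose proof PI_RGT_0; nra).
  assert (Hr : r0 < r0 + rho ^ 2) by (pose proof (pow_lt rho 2 Hrho); lra).
  rewrite <- (polar_rt_at F r0 c rho th) by lra.
  apply (polar_eq0_of_mass_eq0 _ _ Hr (mass_eq0 _ Hr)). split.
  - apply Rdiv_lt_0_compat; lra.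
  - apply (Rmult_lt_reg_l c); [lra |]. replace (c * (th / c)) with th by (field; lra). lra.
Qed.

End Energy.

(** * The Schwarzschild-AdS data *)

Definition mk K k := k ^ 2 - 2 * K.
Definition Hk K mu k r := 6 * mu + mk K k * r.
(* The deformation [s] of the energy in the Riccati argument ([sk_riccati]). *)
Definition sk l K mu k r := - 6 * mu * fS l K mu r / (r * Hk K mu k r).
Definition sk' l K mu k r :=
  - 6 * mu * (fSp l mu r * (r * Hk K mu k r) - fS l K mu r * (Hk K mu k r + r * mk K k))
  / (r * Hk K mu k r) ^ 2.
Definition dk K mu k r := mk K k * k ^ 2 / (r * Hk K mu k r).

Ltac nonzero_conditions :=
  repeat split; repeat apply Rmult_integral_contrapositive_currified;
  try apply pow_nonzero; lra.

Lemma fS_is_derive l K mu r : 0 < r -> l <> 0 -> is_derive (fS l K mu) r (fSp l mu r).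
Proof. intros Hr Hl. unfold fS, fSp. auto_derive; [lra | field; lra]. Qed.

Lemma fSp_cont l mu r : 0 < r -> continuity_pt (fSp l mu) r.
Proof.
  intros Hr. apply continuity_pt_of_ex_derive. unfold fSp. auto_derive. nonzero_conditions.
Qed.

Lemma sk_is_derive l K mu k r : 0 < r -> l <> 0 -> Hk K mu k r <> 0 ->
  is_derive (sk l K mu k) r (sk' l K mu k r).
Proof.
  intros Hr Hl HH. assert (D := fS_is_derive l K mu r Hr Hl).
  unfold sk, sk'. unfold Hk in *. auto_derive.
  - repeat split; [exists (fSp l mu r); exact D | apply Rmult_integral_contrapositive; lra].
  - replace (Derive (fun x => fS l K mu x) r) with (fSp l mu r)
      by (symmetry; apply is_derive_unique, D).
    field. lra.
Qed.

Lemma sk'_cont l K mu k r : 0 < r -> l <> 0 -> Hk K mu k r <> 0 ->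
  continuity_pt (sk' l K mu k) r.
Proof.
  intros Hr Hl HH. apply continuity_pt_of_ex_derive.
  unfold sk', Hk, mk, fS, fSp in *. auto_derive. nonzero_conditions.
Qed.

Lemma VSk_cont l K mu k r : 0 < r -> Hk K mu k r <> 0 -> continuity_pt (VSk l K mu k) r.
Proof.
  intros Hr HH. apply continuity_pt_of_ex_derive.
  unfold VSk, Hk, mk in *. cbv zeta. auto_derive. nonzero_conditions.
Qed.

Lemma sk_riccati l K mu k r : 0 < r -> l <> 0 -> Hk K mu k r <> 0 -> fS l K mu r <> 0 ->
  VSk l K mu k r + sk' l K mu k r - sk l K mu k r ^ 2 / fS l K mu r = dk K mu k r.
Proof.
  intros Hr Hl HH Hf.
  assert (Hf' : (r ^ 2 + K * l ^ 2) * r - 2 * mu * l ^ 2 <> 0).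
  { intro E. apply Hf. unfold fS.
    replace (r ^ 2 / l ^ 2 + K - 2 * mu / r)
      with (((r ^ 2 + K * l ^ 2) * r - 2 * mu * l ^ 2) / (r * l ^ 2)) by (field; lra).
    rewrite E. unfold Rdiv. ring. }
  unfold VSk, sk', sk, dk, Hk, mk, fSp, fS in *. cbv zeta. field. repeat split; auto; lra.
Qed.

Lemma fS_factor l K mu r0 r : 0 < l -> 0 < r0 -> 0 < r -> fS l K mu r0 = 0 ->
  fS l K mu r = (r - r0) * ((r + r0) / l ^ 2 + 2 * mu / (r * r0)).
Proof.
  intros Hl Hr0 Hr E. unfold fS in *.
  replace K with (2 * mu / r0 - r0 ^ 2 / l ^ 2) by lra. field. lra.
Qed.

Lemma fSp_at_root l K mu r0 : 0 < l -> 0 < r0 -> fS l K mu r0 = 0 ->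
  fSp l mu r0 = (3 * r0 ^ 2 / l ^ 2 + K) / r0.
Proof.
  intros Hl Hr0 E. unfold fS, fSp in *.
  replace K with (2 * mu / r0 - r0 ^ 2 / l ^ 2) by lra. field. lra.
Qed.

(* For [K = -1] the cubic [r fS r] is negative at [l / sqrt 3] exactly when
   [mu > - l / (3 sqrt 3)], so it has a root beyond that point. *)
Lemma horizon_gt_AdS_length l mu r0 : 0 < l -> mu < 0 -> - l / (3 * sqrt 3) < mu ->
  (forall r, 0 < r -> fS l (-1) mu r = 0 -> r <= r0) -> l / sqrt 3 < r0.
Proof.
  intros Hl Hmu Hmu3 Hmax.
  assert (H3 : sqrt 3 * sqrt 3 = 3) by (apply sqrt_sqrt; lra).
  assert (H31 : 1 < sqrt 3) by (rewrite <- sqrt_1; apply sqrt_lt_1; lra).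
  set (a := l / sqrt 3).
  assert (Ha : 0 < a) by (apply Rdiv_lt_0_compat; lra).
  assert (Hal : l = a * sqrt 3) by (unfold a; field; lra).
  assert (Hmua : - a / 3 < mu).
  { replace (- a / 3) with (- l / (3 * sqrt 3)) by (rewrite Hal; field; lra). exact Hmu3. }
  set (g r := r ^ 3 / l ^ 2 - r - 2 * mu).
  assert (Hg : continuity g) by (unfold g; reg).
  assert (ga : g a < 0).
  { assert (El : l ^ 2 = 3 * a ^ 2).
    { rewrite Hal. replace ((a * sqrt 3) ^ 2) with (a ^ 2 * (sqrt 3 * sqrt 3)) by ring.
      rewrite H3. ring. }
    unfold g. rewrite El. replace (a ^ 3 / (3 * a ^ 2)) with (a / 3) by (field; lra). lra. }
  assert (gl : 0 < g (l + 1)).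
  { unfold g. replace ((l + 1) ^ 3 / l ^ 2 - (l + 1)) with ((l + 1) * (2 * l + 1) / l ^ 2)
      by (field; lra).
    assert (0 < (l + 1) * (2 * l + 1) / l ^ 2) by (apply Rdiv_lt_0_compat; nra). lra. }
  assert (Hal1 : a < l + 1).
  { apply (Rmult_lt_reg_r (sqrt 3)); [lra |]. rewrite <- Hal. nra. }
  destruct (IVT g a (l + 1) Hg Hal1 ga gl) as [z [Hz Ez]].
  assert (Hza : a < z) by (destruct (Req_dec a z) as [<-|]; lra).
  enough (z <= r0) by lra.
  apply Hmax; [lra |]. unfold fS. unfold g in Ez.
  replace (z ^ 2 / l ^ 2 + -1 - 2 * mu / z) with ((z ^ 3 / l ^ 2 - z - 2 * mu) / z)
    by (field; lra).
  rewrite Ez. unfold Rdiv. ring.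
Qed.

Section Horizon.
Variables (l mu K r0 k : R).
Hypotheses (hl : 0 < l) (hK : K = -1 \/ K = 0 \/ K = 1)
  (hmu01 : K = 0 \/ K = 1 -> 0 < mu) (hmum1 : K = -1 -> - l / (3 * sqrt 3) < mu)
  (hr0pos : 0 < r0) (hr0zero : fS l K mu r0 = 0)
  (hr0max : forall r, 0 < r -> fS l K mu r = 0 -> r <= r0)
  (hk2 : Rmax 0 (2 * K) < k ^ 2).

Lemma mu_neg_AdS : mu < 0 -> K = -1 /\ - r0 / 3 < mu.
Proof.
  intros Hmu. assert (EK : K = -1) by (destruct hK as [|HK]; [| specialize (hmu01 HK)]; lra).
  split; [exact EK |]. subst K.
  assert (Hr0 := horizon_gt_AdS_length l mu r0 hl Hmu (hmum1 eq_refl) hr0max).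
  assert (0 < sqrt 3) by (apply sqrt_lt_R0; lra).
  replace (- l / (3 * sqrt 3)) with (- (l / sqrt 3) / 3) in hmum1 by (field; lra).
  specialize (hmum1 eq_refl). lra.
Qed.

Lemma mk_pos : 0 < mk K k.
Proof. unfold mk. pose proof (Rmax_r 0 (2 * K)). lra. Qed.

Lemma fSp_r0_pos : 0 < fSp l mu r0.
Proof.
  rewrite (fSp_at_root l K mu r0) by auto. apply Rdiv_lt_0_compat; [| exact hr0pos].
  assert (Hl2 : 0 < l ^ 2) by (apply pow_lt; lra).
  destruct (Rlt_or_le mu 0) as [Hmu | Hmu].
  - destruct (mu_neg_AdS Hmu) as [-> _].
    assert (Hr0 := horizon_gt_AdS_length l mu r0 hl Hmu (hmum1 eq_refl) hr0max).
    assert (H3 : sqrt 3 * sqrt 3 = 3) by (apply sqrt_sqrt; lra).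
    assert (0 < sqrt 3) by (apply sqrt_lt_R0; lra).
    assert (l < r0 * sqrt 3) by (apply (Rmult_lt_reg_r (/ sqrt 3));
      [apply Rinv_0_lt_compat; lra | replace (r0 * sqrt 3 * / sqrt 3) with r0 by (field; lra); exact Hr0]).
    assert (l ^ 2 < 3 * r0 ^ 2) by nra.
    replace (3 * r0 ^ 2 / l ^ 2 + -1) with ((3 * r0 ^ 2 - l ^ 2) / l ^ 2) by (field; lra).
    apply Rdiv_lt_0_compat; lra.
  - unfold fS in hr0zero.
    assert (0 <= 2 * mu / r0) by (apply Rle_mult_inv_pos; lra).
    assert (0 < r0 ^ 2 / l ^ 2) by (apply Rdiv_lt_0_compat; [apply pow_lt |]; lra).
    replace (3 * r0 ^ 2 / l ^ 2) with (3 * (r0 ^ 2 / l ^ 2)) by (field; lra). lra.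
Qed.

Lemma fS_pos r : r0 < r -> 0 < fS l K mu r.
Proof.
  intros Hr. rewrite (fS_factor l K mu r0 r) by lra.
  apply Rmult_lt_0_compat; [lra |].
  assert (Hl2 : 0 < l ^ 2) by (apply pow_lt; lra).
  destruct (Rlt_or_le mu 0) as [Hmu | Hmu].
  - assert (Hc := fSp_r0_pos). unfold fSp in Hc.
    replace ((r + r0) / l ^ 2 + 2 * mu / (r * r0)) with
      ((2 * r0 / l ^ 2 + 2 * mu / r0 ^ 2) + (r - r0) * (1 / l ^ 2 + (- 2 * mu) / (r * r0 ^ 2)))
      by (field; lra).
    assert (0 < 1 / l ^ 2) by (apply Rdiv_lt_0_compat; lra).
    assert (0 < (- 2 * mu) / (r * r0 ^ 2))
      by (apply Rdiv_lt_0_compat; [lra | apply Rmult_lt_0_compat; [lra | apply pow_lt; lra]]).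
    nra.
  - assert (0 < (r + r0) / l ^ 2) by (apply Rdiv_lt_0_compat; lra).
    assert (0 <= 2 * mu / (r * r0)) by (apply Rle_mult_inv_pos; nra). lra.
Qed.

Lemma Hk_pos r : r0 <= r -> 0 < Hk K mu k r.
Proof.
  intros Hr. unfold Hk. assert (Hm := mk_pos). unfold mk in *.
  destruct (Rlt_or_le mu 0) as [Hmu | Hmu].
  - destruct (mu_neg_AdS Hmu) as [-> Hmu3]. nra.
  - nra.
Qed.

Lemma sk_mul_rHk r : r0 < r -> sk l K mu k r * (r * Hk K mu k r) = - 6 * mu * fS l K mu r.
Proof.
  intros Hr. assert (HH := Hk_pos r ltac:(lra)). unfold sk. field. split; lra.
Qed.

Lemma sk_bounded_above : exists b, 0 < b /\ forall r, r0 < r -> sk l K mu k r <= b.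
Proof.
  assert (HH0 := Hk_pos r0 (Rle_refl _)).
  set (kap := Hk K mu k r0 / r0). set (B := 1 / l ^ 2 - 2 * mu / r0 ^ 3).
  assert (Hkap : 0 < kap) by (apply Rdiv_lt_0_compat; lra).
  destruct (Rle_or_lt 0 mu) as [Hmu | Hmu].
  - exists 1. split; [lra |]. intros r Hr.
    assert (Hf := fS_pos r Hr). assert (HH := Hk_pos r ltac:(lra)).
    apply (Rmult_le_reg_r (r * Hk K mu k r)); [nra |]. rewrite sk_mul_rHk by lra. nra.
  - destruct (mu_neg_AdS Hmu) as [EK _].
    assert (HB : 0 < B).
    { assert (0 < 1 / l ^ 2) by (apply Rdiv_lt_0_compat; [| apply pow_lt]; lra).
      assert (0 < - 2 * mu / r0 ^ 3) by (apply Rdiv_lt_0_compat; [| apply pow_lt]; lra).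
      unfold B, Rdiv in *. lra. }
    exists (- 6 * mu * B / kap). split; [apply Rdiv_lt_0_compat; nra |].
    intros r Hr. assert (Hf := fS_pos r Hr). assert (HH := Hk_pos r ltac:(lra)).
    assert (Hr3 : r0 ^ 3 <= r ^ 3) by (apply pow_incr; lra).
    assert (EB : (B * r ^ 2 - fS l K mu r) * (r * r0 ^ 3) = r * r0 ^ 3 + 2 * mu * (r0 ^ 3 - r ^ 3))
      by (unfold B, fS; subst K; field; lra).
    assert (Ekap : (r * Hk K mu k r - kap * r ^ 2) * r0 = - 6 * mu * r * (r - r0))
      by (unfold kap, Hk; field; lra).
    assert (HfB : fS l K mu r <= B * r ^ 2).
    { assert (0 < r * r0 ^ 3) by (apply Rmult_lt_0_compat; [| apply pow_lt]; lra). nra. }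
    assert (Hkr : kap * r ^ 2 <= r * Hk K mu k r).
    { assert (0 <= - 6 * mu * r * (r - r0)) by (apply Rmult_le_pos; [apply Rmult_le_pos |]; lra).
      nra. }
    apply (Rmult_le_reg_r (r * Hk K mu k r)); [nra |]. rewrite sk_mul_rHk by lra.
    replace (- 6 * mu * B / kap * (r * Hk K mu k r))
      with (- 6 * mu * B * ((r * Hk K mu k r) / kap)) by (field; lra).
    assert (r ^ 2 <= r * Hk K mu k r / kap).
    { apply (Rmult_le_reg_r kap); [lra |]. replace (r * Hk K mu k r / kap * kap)
        with (r * Hk K mu k r) by (field; lra). lra. }
    assert (0 < - 6 * mu * B) by nra.
    set (X := r * Hk K mu k r / kap) in *. nra.
Qed.

Lemma fS_sk_linear_near_horizon : exists C, 0 < C /\ forall r, r0 < r <= r0 + 1 ->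
  fS l K mu r <= C * (r - r0) /\ Rabs (sk l K mu k r) <= C * (r - r0).
Proof.
  assert (HH0 := Hk_pos r0 (Rle_refl _)). assert (Hm := mk_pos).
  assert (Hl2 : 0 < l ^ 2) by (apply pow_lt; lra).
  pose proof (Rabs_pos mu). pose proof (Rle_abs mu).
  set (C1 := (2 * r0 + 1) / l ^ 2 + 2 * Rabs mu / r0 ^ 2).
  set (C2 := 6 * Rabs mu / (r0 * Hk K mu k r0)).
  assert (HC1 : 0 < C1).
  { assert (0 < (2 * r0 + 1) / l ^ 2) by (apply Rdiv_lt_0_compat; lra).
    assert (0 <= 2 * Rabs mu / r0 ^ 2) by (apply Rle_mult_inv_pos; [| apply pow_lt]; lra).
    unfold C1. lra. }
  assert (HC2 : 0 <= C2) by (apply Rle_mult_inv_pos; nra).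
  exists (C1 * (1 + C2)). split; [nra |]. intros r Hr.
  assert (Hf := fS_pos r ltac:(lra)). assert (HH := Hk_pos r ltac:(lra)).
  assert (Hf1 : fS l K mu r <= C1 * (r - r0)).
  { rewrite (fS_factor l K mu r0 r) by lra. rewrite Rmult_comm.
    apply Rmult_le_compat_r; [lra |]. unfold C1.
    assert ((r + r0) / l ^ 2 <= (2 * r0 + 1) / l ^ 2)
      by (apply Rmult_le_compat_r; [left; apply Rinv_0_lt_compat |]; lra).
    assert (2 * mu / (r * r0) <= 2 * Rabs mu / r0 ^ 2).
    { apply Rle_trans with (2 * Rabs mu / (r * r0)).
      - apply Rmult_le_compat_r; [left; apply Rinv_0_lt_compat |]; nra.
      - apply Rmult_le_compat_l; [lra |]. apply Rinv_le_contravar; nra. }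
    lra. }
  assert (Hs : Rabs (sk l K mu k r) <= C2 * fS l K mu r).
  { apply (Rmult_le_reg_r (r0 * Hk K mu k r0)); [nra |].
    replace (C2 * fS l K mu r * (r0 * Hk K mu k r0)) with (6 * Rabs mu * fS l K mu r)
      by (unfold C2; field; lra).
    assert (E : Rabs (sk l K mu k r) * (r * Hk K mu k r) = 6 * Rabs mu * fS l K mu r).
    { rewrite <- (Rabs_right (r * Hk K mu k r)) by nra.
      rewrite <- Rabs_mult, sk_mul_rHk, !Rabs_mult, (Rabs_right (fS l K mu r)) by lra.
      replace (Rabs (-6)) with 6 by (rewrite Rabs_left; lra). ring. }
    rewrite <- E. apply Rmult_le_compat_l; [apply Rabs_pos |].
    apply Rmult_le_compat; try lra. unfold Hk. nra. }
  split; nra.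
Qed.

Lemma dk_pos r : 0 < k -> r0 < r -> 0 < dk K mu k r.
Proof.
  intros hk Hr. assert (0 < k ^ 2) by (apply pow_lt; lra). assert (Hm := mk_pos).
  unfold dk. apply Rdiv_lt_0_compat; [nra | apply Rmult_lt_0_compat; [| apply Hk_pos]; lra].
Qed.

End Horizon.

Theorem mainTheorem7 (l mu K r0 k : R)
  (hl : 0 < l)
  (hK : K = -1 \/ K = 0 \/ K = 1)
  (hmu01 : K = 0 \/ K = 1 -> 0 < mu)
  (hmum1 : K = -1 -> - l / (3 * sqrt 3) < mu)
  (hr0pos : 0 < r0)
  (hr0zero : fS l K mu r0 = 0)
  (hr0max : forall r, 0 < r -> fS l K mu r = 0 -> r <= r0)
  (hk : 0 < k)
  (hk2 : Rmax 0 (2 * K) < k ^ 2)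
  (F : R -> R -> R)
  (hF : smooth2 F)
  (* u(r,t) := F in the coordinates (r,t), t of period 4 pi / f'(r0) *)
  (hL2 : exists G : R -> R,
      (forall r, r0 <= r ->
         is_integral (fun t => (polar_rt r0 (fSp l mu r0 / 2) F r t) ^ 2)
                     0 (4 * PI / fSp l mu r0) (G r)) /\
      exists M, forall R0, r0 <= R0 -> exists I, is_integral G r0 R0 I /\ I <= M)
  (heq : exists Ur Urr Ut Utt : R -> R -> R,
      let u := polar_rt r0 (fSp l mu r0 / 2) F in
      (forall r t, r0 < r -> derivable_pt_lim (fun a => u a t) r (Ur r t)) /\
      (forall r t, r0 < r -> derivable_pt_lim (fun a => Ur a t) r (Urr r t)) /\
      (forall r t, r0 < r -> derivable_pt_lim (fun b => u r b) t (Ut r t)) /\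
      (forall r t, r0 < r -> derivable_pt_lim (fun b => Ut r b) t (Utt r t)) /\
      (* - Delta u + V u = 0, Delta u = d_r (f d_r u) + f^{-1} d_t^2 u *)
      (forall r t, r0 < r ->
         - (fSp l mu r * Ur r t + fS l K mu r * Urr r t
            + Utt r t / fS l K mu r)
         + VSk l K mu k r * u r t = 0)) :
  forall x y, F x y = 0.
Proof.
  destruct (smooth2_C2_partials F hF) as (Fx & Fy & Fxx & Fxy & Fyx & Fyy & hD).
  destruct heq as (Ur & Urr & Ut & Utt & hpolar). cbv zeta in hpolar.
  destruct hpolar as (hUr & hUrr & hUt & hUtt & hpde).
  assert (hc := fSp_r0_pos l mu K r0 k hl hK hmu01 hmum1 hr0pos hr0zero hr0max hk2).
  assert (hf := fS_pos l mu K r0 k hl hK hmu01 hmum1 hr0pos hr0zero hr0max hk2).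
  assert (hH := Hk_pos l mu K r0 k hl hK hmu01 hmum1 hr0pos hr0zero hr0max hk2).
  assert (hPI := PI_RGT_0).
  apply (riccati_energy_vanishing r0 (fSp l mu r0 / 2) (4 * PI / fSp l mu r0)
           (fS l K mu) (fSp l mu) (sk l K mu k) (sk' l K mu k) (VSk l K mu k) (dk K mu k)
           F Fx Fy Fxx Fxy Fyx Fyy hD); intros.
  - apply Rdiv_lt_0_compat; lra.
  - field. lra.
  - apply fS_is_derive; lra.
  - apply sk_is_derive; [lra | lra | apply Rgt_not_eq, hH; lra].
  - apply fSp_cont. lra.
  - apply sk'_cont; [lra | lra | apply Rgt_not_eq, hH; lra].
  - apply VSk_cont; [lra | apply Rgt_not_eq, hH; lra].
  - auto.
  - apply sk_riccati; [lra | lra | apply Rgt_not_eq, hH; lra | apply Rgt_not_eq, hf; lra].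
  - apply (dk_pos l mu K r0 k); auto.
  - eapply polar_dr_dr; eauto.
  - apply (fS_sk_linear_near_horizon l mu K r0 k); auto.
  - apply (sk_bounded_above l mu K r0 k); auto.
  - exact hL2.
Qed.
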